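(* Let $(X,\tau)$ be a $\mathbb{B}$-topological space and $\gamma$ a closed set of $(X,\tau)$. Then $\gamma$ is irreducible if and only if $\gamma[tt]$ is an irreducible closed subset of the topological space $(X,\tau[tt])$ and $\gamma[ff]$ is an irreducible closed subset of the topological space $(X,\tau[ff])$.
   Context: $\mathbb{B}=\{0,1,tt,ff\}$ is the four-element Boolean algebra with bottom $0$, top $1$, and $tt,ff$ incomparable and complements of each other; $\neg$ is its complement and $a\to b=\neg a\vee b$. $\mathbb{B}^X$ is the set of maps $X\to\mathbb{B}$ with pointwise order and operations; $b_X$ is the constant map with value $b$; $\lambda[b]=\{x\in X:\lambda(x)\ge b\}$. A $\mathbb{B}$-topology on $X$ is a subset $\tau\subseteq\mathbb{B}^X$ containing all constant maps and closed under arbitrary pointwise joins and finite pointwise meets; $\tau[tt]=\{\lambda[tt]:\lambda\in\tau\}$ and $\tau[ff]=\{\lambda[ff]:\lambda\in\tau\}$ are topologies. $\gamma\in\mathbb{B}^X$ is closed if $\neg\gamma\in\tau$. $\mathrm{sub}_X(\lambda,\mu)=\bigwedge_{x\in X}(\lambda(x)\to\mu(x))$. A closed set $\gamma$ is irreducible if (i) $\mathrm{sub}_X(\gamma,b_X)=b$ for all $b\in\mathbb{B}$, and (ii) $\mathrm{sub}_X(\gamma,\mu_1\vee\mu_2)=\mathrm{sub}_X(\gamma,\mu_1)\vee\mathrm{sub}_X(\gamma,\mu_2)$ for all closed sets $\mu_1,\mu_2$. An irreducible closed subset of a topological space is a nonempty closed set not contained in the union of two closed sets unless it is contained in one of them.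 *)

From Stdlib Require Import Classical ClassicalEpsilon.

Inductive B4 : Type := B0 | B1 | Btt | Bff.

Definition leB (a b : B4) : bool :=
  match a, b with
  | B0, _ => true
  | _, B1 => true
  | Btt, Btt => true
  | Bff, Bff => true
  | _, _ => false
  end.

Definition joinB (a b : B4) : B4 :=
  match a, b with
  | B0, c => c
  | c, B0 => c
  | B1, _ => B1
  | _, B1 => B1
  | Btt, Btt => Btt
  | Bff, Bff => Bff
  | _, _ => B1
  end.

Definition meetB (a b : B4) : B4 :=
  match a, b with
  | B1, c => c
  | c, B1 => c
  | B0, _ => B0
  | _, B0 => B0
  | Btt, Btt => Btt
  | Bff, Bff => Bff
  | _, _ => B0
  end.

Definition negB (a : B4) : B4 :=
  match a with B0 => B1 | B1 => B0 | Btt => Bff | Bff => Btt end.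

Definition impB (a b : B4) : B4 := joinB (negB a) b.

Definition is_lubB (S : B4 -> Prop) (c : B4) : Prop :=
  (forall b, S b -> leB b c = true) /\
  (forall d, (forall b, S b -> leB b d = true) -> leB c d = true).
Definition is_glbB (S : B4 -> Prop) (c : B4) : Prop :=
  (forall b, S b -> leB c b = true) /\
  (forall d, (forall b, S b -> leB d b = true) -> leB d c = true).

(* arbitrary join and meet in B (they exist since B is a complete lattice) *)
Definition supB (S : B4 -> Prop) : B4 := epsilon (inhabits B0) (is_lubB S).
Definition infB (S : B4 -> Prop) : B4 := epsilon (inhabits B0) (is_glbB S).

(* B-topology on X: contains constants, closed under arbitrary pointwise
   joins and finite (binary; the empty meet is the constant 1) pointwise meets *)
Definition is_Btopology {X : Type} (tau : (X -> B4) -> Prop) : Prop :=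
  (forall b : B4, tau (fun _ => b)) /\
  (forall F : (X -> B4) -> Prop, (forall l, F l -> tau l) ->
     tau (fun x => supB (fun b => exists l, F l /\ l x = b))) /\
  (forall l m, tau l -> tau m -> tau (fun x => meetB (l x) (m x))).

Definition cut {X : Type} (l : X -> B4) (b : B4) : X -> Prop :=
  fun x => leB b (l x) = true.

Definition tau_cut {X : Type} (tau : (X -> B4) -> Prop) (b : B4)
  : (X -> Prop) -> Prop :=
  fun U => exists l, tau l /\ (forall x, U x <-> cut l b x).

Definition Bclosed {X : Type} (tau : (X -> B4) -> Prop) (g : X -> B4) : Prop :=
  tau (fun x => negB (g x)).

Definition subX {X : Type} (l m : X -> B4) : B4 :=
  infB (fun b => exists x, impB (l x) (m x) = b).

Definition Birreducible {X : Type} (tau : (X -> B4) -> Prop) (g : X -> B4) : Prop :=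
  Bclosed tau g /\
  (forall b : B4, subX g (fun _ => b) = b) /\
  (forall m1 m2, Bclosed tau m1 -> Bclosed tau m2 ->
     subX g (fun x => joinB (m1 x) (m2 x)) = joinB (subX g m1) (subX g m2)).

(* ordinary topological spaces given by their family of open sets *)
Definition top_closed {X : Type} (O : (X -> Prop) -> Prop) (C : X -> Prop) : Prop :=
  O (fun x => ~ C x).

Definition irreducible_closed {X : Type} (O : (X -> Prop) -> Prop) (C : X -> Prop)
  : Prop :=
  top_closed O C /\ (exists x, C x) /\
  (forall A B, top_closed O A -> top_closed O B ->
     (forall x, C x -> A x \/ B x) ->
     (forall x, C x -> A x) \/ (forall x, C x -> B x)).

(* Every element of B is determined by the two atoms tt, ff below it, and
   complement, join and implication are computed atom by atom.  Hence, read at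
   an atom c, sub_X(gamma, mu) is the inclusion gamma[c] <= mu[c], and the two
   conditions of irreducibility split into one condition for each of the
   topologies tau[tt] and tau[ff]: (i) at c says gamma[c] is nonempty, (ii) at c
   says gamma[c] is not covered by two closed sets unless by one of them, since
   the closed sets of tau[c] are exactly the cuts mu[c] of closed B-sets mu. *)
From Stdlib Require Import Classical ClassicalEpsilon FunctionalExtensionality Bool.

Definition atomB (c : B4) : Prop := c = Btt \/ c = Bff.

Lemma leB_negB c a : atomB c -> leB c (negB a) = negb (leB c a).
Proof. intros [-> | ->]; destruct a; reflexivity. Qed.

Lemma leB_joinB c a b : atomB c -> leB c (joinB a b) = leB c a || leB c b.
Proof. intros [-> | ->]; destruct a, b; reflexivity. Qed.

Lemma leB_impB c a b : atomB c -> leB c (impB a b) = implb (leB c a) (leB c b).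
Proof. intros [-> | ->]; destruct a, b; reflexivity. Qed.

Lemma leB_atomsP a b :
  leB a b = true <-> forall c, atomB c -> leB c a = true -> leB c b = true.
Proof.
  split.
  - intros Hab c [-> | ->]; destruct a, b; simpl in *; congruence.
  - intros H.
    pose proof (H Btt (or_introl eq_refl)); pose proof (H Bff (or_intror eq_refl)).
    destruct a, b; simpl in *; intuition congruence.
Qed.

Lemma B4_eq_atoms a b : a = b <-> leB Btt a = leB Btt b /\ leB Bff a = leB Bff b.
Proof.
  split; [intros ->; auto|].
  destruct a, b; simpl; intros [? ?]; congruence.
Qed.

Lemma B4_of_atoms (P Q : Prop) :
  exists c, (leB Btt c = true <-> P) /\ (leB Bff c = true <-> Q).
Proof.
  destruct (classic P), (classic Q).
  - exists B1; simpl; tauto.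
  - exists Btt; simpl; intuition congruence.
  - exists Bff; simpl; intuition congruence.
  - exists B0; simpl; intuition congruence.
Qed.

Lemma is_glbB_atomsP S c :
  (forall k, atomB k -> leB k c = true <-> forall b, S b -> leB k b = true) ->
  is_glbB S c.
Proof.
  intros Hc; split.
  - intros b Sb; apply leB_atomsP; intros k Hk Hkc.
    exact (proj1 (Hc k Hk) Hkc b Sb).
  - intros d Hd; apply leB_atomsP; intros k Hk Hkd.
    apply (Hc k Hk); intros b Sb.
    exact (proj1 (leB_atomsP d b) (Hd b Sb) k Hk Hkd).
Qed.

Lemma glbB_exists S : exists c, is_glbB S c.
Proof.
  destruct (B4_of_atoms (forall b, S b -> leB Btt b = true)
                        (forall b, S b -> leB Bff b = true)) as [c [Htt Hff]].
  exists c; apply is_glbB_atomsP; intros k [-> | ->]; assumption.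
Qed.

Lemma leB_infB S c :
  atomB c -> leB c (infB S) = true <-> forall b, S b -> leB c b = true.
Proof.
  intros Hc.
  destruct (epsilon_spec (inhabits B0) (is_glbB S) (glbB_exists S)) as [Hlow Hgreat].
  fold (infB S) in Hlow, Hgreat.
  split.
  - intros Hinf b Sb.
    exact (proj1 (leB_atomsP _ _) (Hlow b Sb) c Hc Hinf).
  - intros Hall; exact (Hgreat c Hall).
Qed.

Lemma leB_subX {X : Type} (g m : X -> B4) c :
  atomB c -> leB c (subX g m) = true <-> forall x, cut g c x -> cut m c x.
Proof.
  intros Hc; unfold subX, cut; rewrite leB_infB by exact Hc; split.
  - intros H x Hg.
    specialize (H _ (ex_intro _ x eq_refl)).
    rewrite leB_impB, Hg in H by exact Hc; exact H.
  - intros H b [x <-]; rewrite leB_impB by exact Hc.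
    destruct (leB c (g x)) eqn:Hg; simpl; auto.
Qed.

Lemma cut_joinB {X : Type} (m1 m2 : X -> B4) c x :
  atomB c -> cut (fun y => joinB (m1 y) (m2 y)) c x <-> cut m1 c x \/ cut m2 c x.
Proof. intros Hc; unfold cut; rewrite leB_joinB, orb_true_iff by exact Hc; tauto. Qed.

Section AtomCut.

Variables (X : Type) (c : B4).
Hypothesis atom_c : atomB c.

Lemma cut_negB (l : X -> B4) x : cut (fun y => negB (l y)) c x <-> ~ cut l c x.
Proof.
  unfold cut; rewrite leB_negB by exact atom_c.
  destruct (leB c (l x)); simpl; intuition congruence.
Qed.

Lemma subX_const_atomP (g : X -> B4) :
  (forall b, leB c (subX g (fun _ => b)) = leB c b) <-> exists x, cut g c x.
Proof.
  assert (Hconst : forall b, leB c (subX g (fun _ => b)) = true <->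
                             ((exists x, cut g c x) -> leB c b = true)).
  { intros b; rewrite leB_subX by exact atom_c; unfold cut at 2.
    split; [intros H [x Hx]; exact (H x Hx) | intros H x Hx; exact (H (ex_intro _ x Hx))]. }
  split.
  - intros H; apply NNPP; intros Hempty.
    assert (Hbot : leB c B0 = true).
    { rewrite <- H; apply Hconst; tauto. }
    destruct atom_c as [-> | ->]; discriminate.
  - intros Hne b; apply eq_iff_eq_true; rewrite Hconst; tauto.
Qed.

Variable tau : (X -> B4) -> Prop.

Lemma top_closed_cutP (A : X -> Prop) :
  top_closed (tau_cut tau c) A <->
  exists m, Bclosed tau m /\ forall x, A x <-> cut m c x.
Proof.
  split.
  - intros [l [Hl HA]]; exists (fun x => negB (l x)); split.
    + unfold Bclosed.
      replace (fun x => negB (negB (l x))) with l; [exact Hl|].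
      apply functional_extensionality; intro x; destruct (l x); reflexivity.
    + intro x; rewrite cut_negB, <- HA; tauto.
  - intros [m [Hm HA]]; exists (fun x => negB (m x)); split; [exact Hm|].
    intro x; rewrite cut_negB, <- HA; tauto.
Qed.

Lemma cut_top_closed (m : X -> B4) : Bclosed tau m -> top_closed (tau_cut tau c) (cut m c).
Proof. intros Hm; apply top_closed_cutP; exists m; split; [exact Hm | tauto]. Qed.

Lemma subX_join_atomP (g : X -> B4) :
  (forall m1 m2, Bclosed tau m1 -> Bclosed tau m2 ->
     leB c (subX g (fun x => joinB (m1 x) (m2 x))) =
     leB c (joinB (subX g m1) (subX g m2))) <->
  (forall A B, top_closed (tau_cut tau c) A -> top_closed (tau_cut tau c) B ->
     (forall x, cut g c x -> A x \/ B x) ->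
     (forall x, cut g c x -> A x) \/ (forall x, cut g c x -> B x)).
Proof.
  assert (Hjoin : forall m1 m2,
    leB c (subX g (fun x => joinB (m1 x) (m2 x))) = true <->
      forall x, cut g c x -> cut m1 c x \/ cut m2 c x).
  { intros m1 m2; rewrite leB_subX by exact atom_c.
    split; intros H x Hx; apply cut_joinB; auto. }
  assert (Hsplit : forall m1 m2,
    leB c (joinB (subX g m1) (subX g m2)) = true <->
      (forall x, cut g c x -> cut m1 c x) \/ (forall x, cut g c x -> cut m2 c x)).
  { intros m1 m2; rewrite leB_joinB, orb_true_iff, !leB_subX by exact atom_c; tauto. }
  split.
  - intros H A B HA HB Hcover.
    apply top_closed_cutP in HA as [m1 [Hm1 HA]].
    apply top_closed_cutP in HB as [m2 [Hm2 HB]].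
    assert (Hcut : (forall x, cut g c x -> cut m1 c x) \/
                   (forall x, cut g c x -> cut m2 c x)).
    { apply Hsplit; rewrite <- (H m1 m2 Hm1 Hm2); apply Hjoin.
      intros x Hx; rewrite <- HA, <- HB; auto. }
    destruct Hcut as [H1 | H2]; [left | right]; intros x Hx;
      [apply HA | apply HB]; auto.
  - intros H m1 m2 Hm1 Hm2; apply eq_iff_eq_true; rewrite Hjoin, Hsplit.
    split.
    + apply H; apply cut_top_closed; assumption.
    + intros [H1 | H2] x Hx; auto.
Qed.

End AtomCut.

Lemma atomB_tt : atomB Btt. Proof. left; reflexivity. Qed.
Lemma atomB_ff : atomB Bff. Proof. right; reflexivity. Qed.

Lemma subX_constP {X : Type} (g : X -> B4) :
  (forall b, subX g (fun _ => b) = b) <->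
  (exists x, cut g Btt x) /\ (exists x, cut g Bff x).
Proof.
  rewrite <- (subX_const_atomP X Btt atomB_tt), <- (subX_const_atomP X Bff atomB_ff).
  setoid_rewrite B4_eq_atoms; firstorder.
Qed.

Lemma subX_joinP {X : Type} (tau : (X -> B4) -> Prop) (g : X -> B4) :
  (forall m1 m2, Bclosed tau m1 -> Bclosed tau m2 ->
     subX g (fun x => joinB (m1 x) (m2 x)) = joinB (subX g m1) (subX g m2)) <->
  (forall A B, top_closed (tau_cut tau Btt) A -> top_closed (tau_cut tau Btt) B ->
     (forall x, cut g Btt x -> A x \/ B x) ->
     (forall x, cut g Btt x -> A x) \/ (forall x, cut g Btt x -> B x)) /\
  (forall A B, top_closed (tau_cut tau Bff) A -> top_closed (tau_cut tau Bff) B ->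
     (forall x, cut g Bff x -> A x \/ B x) ->
     (forall x, cut g Bff x -> A x) \/ (forall x, cut g Bff x -> B x)).
Proof.
  rewrite <- (subX_join_atomP X Btt atomB_tt tau), <- (subX_join_atomP X Bff atomB_ff tau).
  setoid_rewrite B4_eq_atoms; firstorder.
Qed.

Theorem mainTheorem6 (X : Type) (tau : (X -> B4) -> Prop) (g : X -> B4) :
  is_Btopology tau -> Bclosed tau g ->
  (Birreducible tau g <->
   irreducible_closed (tau_cut tau Btt) (cut g Btt) /\
   irreducible_closed (tau_cut tau Bff) (cut g Bff)).
Proof.
  intros _ Hg.
  pose proof (cut_top_closed X Btt atomB_tt tau g Hg) as Hg_tt.
  pose proof (cut_top_closed X Bff atomB_ff tau g Hg) as Hg_ff.
  unfold Birreducible, irreducible_closed.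
  rewrite subX_constP, subX_joinP.
  tauto.
Qed.
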